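(* Let $c\in\mathbb{C}$ with $|c|>1$, let $r=\sqrt{|c|^2-1}$, and define $\tau\colon S^1\to S^1$ (where $S^1=\{z\in\mathbb{C}:|z|=1\}$) by $\tau(z)=\dfrac{r^2}{\bar z-\bar c}+c$ if $|z-c|>r$ and $\tau(z)=z$ otherwise. Then for all $x,y\in S^1$, $$|\tau(x)-\tau(y)|\le\min\!\Big(1,\frac{r}{|x-c|}\Big)\min\!\Big(1,\frac{r}{|y-c|}\Big)|x-y|\le|x-y|.$$
   Context: In the Poincaré disk model $\mathbb{D}=\{|z|<1\}$ of the hyperbolic plane, $\{z\in\mathbb{D}:|z-c|=r\}$ is a hyperbolic line not through $0$, and $\tau$ is the one-way reflection in it (reflecting points on the same side as $0$), restricted to the boundary circle $S^1$. *)

From Stdlib Require Import Reals Lra.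
From Coquelicot Require Import Coquelicot.
Open Scope R_scope.

Definition refl_r (c : C) : R := sqrt (Cmod c ^ 2 - 1).

Definition tau (c : C) (z : C) : C :=
  let r := refl_r c in
  if Rlt_dec r (Cmod (z - c)) then
    Cplus (Cdiv (RtoC (r ^ 2)) (Cminus (Cconj z) (Cconj c))) c
  else z.

(* Outside the circle |z - c| = r, tau is the inversion i(z) = c + r^2 / conj (z - c), which
   scales distances exactly: |i(x) - i(y)| = (r / |x - c|) (r / |y - c|) |x - y|.  When x is
   outside and y inside, the identity
     |r^2 - conj w v|^2 = r^2 |w - v|^2 + (|w|^2 - r^2) (|v|^2 - r^2)     (w = x - c, v = y - c)
   has a nonpositive last term, so |i(x) - y| <= (r / |x - c|) |x - y|.  The hypothesis
   |c| > 1 only serves to make r positive and to keep the unit circle away from c. *)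
From Stdlib Require Import Reals Lra.
From Coquelicot Require Import Coquelicot.
Open Scope R_scope.

Definition circle_inversion (c : C) (r : R) (z : C) : C :=
  (c + RtoC (r ^ 2) / Cconj (z - c))%C.

Definition one_way_reflection (c : C) (r : R) (z : C) : C :=
  if Rlt_dec r (Cmod (z - c)%C) then circle_inversion c r z else z.

(* At z = c this is Rmin 1 (r / 0) = 0, a junk value; hence the hypotheses z <> c below. *)
Definition contraction_factor (c : C) (r : R) (z : C) : R := Rmin 1 (r / Cmod (z - c)%C).

Lemma tau_one_way_reflection (c z : C) : tau c z = one_way_reflection c (refl_r c) z.
Proof.
  unfold tau, one_way_reflection, circle_inversion.
  destruct Rlt_dec; [|reflexivity].
  rewrite Cminus_conj; apply Cplus_comm.
Qed.

Lemma Cmod_sub_sym (x y : C) : Cmod (x - y) = Cmod (y - x).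
Proof. rewrite <- Cmod_opp; f_equal; ring. Qed.

Lemma Cconj_neq_0 (w : C) : w <> 0%C -> Cconj w <> 0%C.
Proof. intros Hw; apply Cmod_gt_0; rewrite Cmod_conj; apply Cmod_gt_0, Hw. Qed.

Lemma Cmod_sub_neq_0 (x c : C) : x <> c -> Cmod (x - c) <> 0.
Proof. intros Hxc H; apply Hxc, Ceq_minus, Cmod_eq_0, H. Qed.

Lemma Cmod_sub_conj_mul_sq (a : R) (w v : C) :
  Cmod (RtoC a - Cconj w * v) ^ 2
  = a * Cmod (w - v) ^ 2 + (Cmod w ^ 2 - a) * (Cmod v ^ 2 - a).
Proof. destruct w as [w1 w2], v as [v1 v2]; rewrite !Cmod2_alt; simpl; ring. Qed.

Lemma circle_inversion_sub (c : C) (r : R) (x y : C) : x <> c -> y <> c ->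
  Cmod (circle_inversion c r x - circle_inversion c r y)
  = r / Cmod (x - c) * (r / Cmod (y - c)) * Cmod (x - y).
Proof.
  intros Hx Hy; unfold circle_inversion.
  assert (Hx' : Cconj (x - c) <> 0%C) by now apply Cconj_neq_0, Cminus_eq_contra.
  assert (Hy' : Cconj (y - c) <> 0%C) by now apply Cconj_neq_0, Cminus_eq_contra.
  replace (c + RtoC (r ^ 2) / Cconj (x - c) - (c + RtoC (r ^ 2) / Cconj (y - c)))%C
    with (RtoC (r ^ 2) * Cconj (y - x) / (Cconj (x - c) * Cconj (y - c)))%C.
  2:{ rewrite !Cminus_conj in *; field; tauto. }
  rewrite Cmod_div, !Cmod_mult, !Cmod_conj, Cmod_R, (Cmod_sub_sym y x)
    by (apply Cmult_neq_0; assumption).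
  rewrite Rabs_pos_eq by apply pow2_ge_0.
  field; split; apply Cmod_sub_neq_0; assumption.
Qed.

Lemma circle_inversion_sub_inside (c : C) (r : R) (x y : C) : 0 <= r ->
  r < Cmod (x - c) -> Cmod (y - c) <= r ->
  Cmod (circle_inversion c r x - y) <= r / Cmod (x - c) * Cmod (x - y).
Proof.
  intros Hr Hx Hy; unfold circle_inversion.
  set (w := (x - c)%C) in *; set (v := (y - c)%C) in *.
  assert (Hw : Cconj w <> 0%C) by (apply Cconj_neq_0, Cmod_gt_0; lra).
  replace (c + RtoC (r ^ 2) / Cconj w - y)%C with ((RtoC (r ^ 2) - Cconj w * v) / Cconj w)%C
    by (unfold v; field; exact Hw).
  replace (x - y)%C with (w - v)%C by (unfold w, v; ring).
  rewrite Cmod_div, Cmod_conj by exact Hw.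
  assert (Hnum : Cmod (RtoC (r ^ 2) - Cconj w * v) <= r * Cmod (w - v)).
  { assert (Hsign : 0 <= (Cmod w ^ 2 - r ^ 2) * (r ^ 2 - Cmod v ^ 2)).
    { pose proof (Cmod_ge_0 v); apply Rmult_le_pos; nra. }
    apply Rsqr_incr_0_var.
    - rewrite !Rsqr_pow2, Cmod_sub_conj_mul_sq; nra.
    - pose proof (Cmod_ge_0 (w - v)); nra. }
  replace (r / Cmod w * Cmod (w - v)) with (r * Cmod (w - v) / Cmod w) by (field; lra).
  apply Rmult_le_compat_r; [apply Rlt_le, Rinv_0_lt_compat; lra | exact Hnum].
Qed.

Lemma contraction_factor_outside (c : C) (r : R) (z : C) : 0 <= r ->
  r < Cmod (z - c) -> contraction_factor c r z = r / Cmod (z - c).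
Proof.
  intros Hr Hz; pose proof (Cmod_ge_0 (z - c)).
  apply Rmin_right, (Rdiv_le_1 r (Cmod (z - c))); lra.
Qed.

Lemma contraction_factor_inside (c : C) (r : R) (z : C) :
  z <> c -> Cmod (z - c) <= r -> contraction_factor c r z = 1.
Proof.
  intros Hzc Hz; pose proof (Cmod_ge_0 (z - c)); pose proof (Cmod_sub_neq_0 z c Hzc).
  apply Rmin_left; rewrite <- (Rdiv_diag (Cmod (z - c))) by assumption.
  apply Rmult_le_compat_r; [apply Rlt_le, Rinv_0_lt_compat|]; lra.
Qed.

Lemma contraction_factor_bounds (c : C) (r : R) (z : C) :
  0 <= r -> z <> c -> 0 <= contraction_factor c r z <= 1.
Proof.
  intros Hr Hzc; split; [|apply Rmin_l].
  apply Rmin_glb; [lra | apply Rdiv_le_0_compat; [exact Hr|]].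
  apply Cmod_gt_0, Cminus_eq_contra, Hzc.
Qed.

Lemma one_way_reflection_outside (c : C) (r : R) (z : C) :
  r < Cmod (z - c) -> one_way_reflection c r z = circle_inversion c r z.
Proof. unfold one_way_reflection; destruct Rlt_dec; [reflexivity | contradiction]. Qed.

Lemma one_way_reflection_inside (c : C) (r : R) (z : C) :
  Cmod (z - c) <= r -> one_way_reflection c r z = z.
Proof. unfold one_way_reflection; destruct Rlt_dec; [lra | reflexivity]. Qed.

Lemma one_way_reflection_sub_outside (c : C) (r : R) (x y : C) : 0 <= r ->
  r < Cmod (x - c) -> y <> c ->
  Cmod (one_way_reflection c r x - one_way_reflection c r y)
  <= contraction_factor c r x * contraction_factor c r y * Cmod (x - y).
Proof.
  intros Hr Hx Hyc.
  assert (Hxc : x <> c) by (rewrite Ceq_minus; apply Cmod_gt_0; lra).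
  rewrite one_way_reflection_outside, contraction_factor_outside by assumption.
  destruct (Rlt_dec r (Cmod (y - c))) as [Hy|Hy].
  - rewrite one_way_reflection_outside, contraction_factor_outside by assumption.
    rewrite circle_inversion_sub by assumption; apply Rle_refl.
  - apply Rnot_lt_le in Hy.
    rewrite one_way_reflection_inside, contraction_factor_inside, Rmult_1_r by assumption.
    apply circle_inversion_sub_inside; assumption.
Qed.

Lemma one_way_reflection_contract (c : C) (r : R) (x y : C) : 0 <= r -> x <> c -> y <> c ->
  Cmod (one_way_reflection c r x - one_way_reflection c r y)
  <= contraction_factor c r x * contraction_factor c r y * Cmod (x - y).
Proof.
  intros Hr Hxc Hyc.
  destruct (Rlt_dec r (Cmod (x - c))) as [Hx|Hx];
    [now apply one_way_reflection_sub_outside|apply Rnot_lt_le in Hx].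
  destruct (Rlt_dec r (Cmod (y - c))) as [Hy|Hy].
  - rewrite Cmod_sub_sym, (Cmod_sub_sym x), (Rmult_comm (contraction_factor c r x)).
    apply one_way_reflection_sub_outside; assumption.
  - apply Rnot_lt_le in Hy.
    rewrite !one_way_reflection_inside, !contraction_factor_inside by assumption.
    lra.
Qed.

Lemma refl_r_pos (c : C) : 1 < Cmod c -> 0 < refl_r c.
Proof. intros Hc; apply sqrt_lt_R0; set (m := Cmod c) in *; nra. Qed.

Lemma neq_of_Cmod_lt (x c : C) : Cmod x < Cmod c -> x <> c.
Proof. intros H ->; lra. Qed.

Theorem mainTheorem5 (c : C) (hc : 1 < Cmod c) (x y : C)
  (hx : Cmod x = 1) (hy : Cmod y = 1) :
  Cmod (Cminus (tau c x) (tau c y))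
    <= Rmin 1 (refl_r c / Cmod (Cminus x c)) * Rmin 1 (refl_r c / Cmod (Cminus y c))
       * Cmod (Cminus x y)
  /\ Rmin 1 (refl_r c / Cmod (Cminus x c)) * Rmin 1 (refl_r c / Cmod (Cminus y c))
       * Cmod (Cminus x y) <= Cmod (Cminus x y).
Proof.
  pose proof (Rlt_le _ _ (refl_r_pos c hc)) as Hr.
  assert (Hxc : x <> c) by (apply neq_of_Cmod_lt; lra).
  assert (Hyc : y <> c) by (apply neq_of_Cmod_lt; lra).
  split.
  - rewrite !tau_one_way_reflection; exact (one_way_reflection_contract c _ x y Hr Hxc Hyc).
  - change (contraction_factor c (refl_r c) x * contraction_factor c (refl_r c) y
              * Cmod (x - y) <= Cmod (x - y)).
    pose proof (contraction_factor_bounds c _ x Hr Hxc).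
    pose proof (contraction_factor_bounds c _ y Hr Hyc).
    set (fx := contraction_factor _ _ x) in *; set (fy := contraction_factor _ _ y) in *.
    assert (Hf : fx * fy <= 1) by nra.
    pose proof (Rmult_le_compat_r _ _ _ (Cmod_ge_0 (x - y)) Hf); lra.
Qed.
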